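(* Let $\Omega$ be a set and $G$ a subgroup of $S=\mathrm{Sym}(\Omega)$ which is discrete in the function topology on $S$ and such that each element of $G$ moves only finitely many elements of $\Omega$. Then $G$ is finite.
   Context: $\mathrm{Sym}(\Omega)$ is the group of all permutations of $\Omega$, with the function topology (pointwise convergence, $\Omega$ discrete); discrete means discrete in the subspace topology. *)

From Stdlib Require Import List.

Definition is_perm {Omega : Type} (f : Omega -> Omega) : Prop :=
  exists g : Omega -> Omega,
    (forall x, g (f x) = x) /\ (forall x, f (g x) = x).

Definition is_subgroup_Sym {Omega : Type} (G : (Omega -> Omega) -> Prop) : Prop :=
  (forall f, G f -> is_perm f) /\
  G (fun x => x) /\
  (forall f g, G f -> G g -> G (fun x => f (g x))) /\
  (forall f, G f -> exists h, G h /\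
       (forall x, h (f x) = x) /\ (forall x, f (h x) = x)).

(* Discreteness of G in the subspace topology induced by the function
   topology: every g in G has a basic open neighbourhood
   {h | h agrees with g on the finite set F} meeting G only in g. *)
Definition discrete_pointwise {Omega : Type} (G : (Omega -> Omega) -> Prop) : Prop :=
  forall g, G g -> exists F : list Omega,
    forall h, G h -> (forall x, In x F -> h x = g x) -> h = g.

Definition finitary {Omega : Type} (g : Omega -> Omega) : Prop :=
  exists F : list Omega, forall x, g x <> x -> In x F.

Definition finite_set {A : Type} (G : A -> Prop) : Prop :=
  exists l : list A, forall a, G a -> In a l.

(* Discreteness at the identity gives a finite base F: only the identity of G
   fixes F pointwise.  Induct on the length of a base.  If G contains some
   g <> 1, with finite support S, then every h in G maps some point of F into
   S; otherwise h^-1 g h would fix F pointwise and g would be trivial.  Hence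
   G is the finite union, over z in F and s in S, of the transporters
   {h | h z = s}, each empty or a coset of the stabiliser G_z, and F minus z
   is a shorter base of G_z. *)
From Stdlib Require Import List.
From Stdlib Require Import Classical FunctionalExtensionality Lia.

Lemma finite_set_union {A B : Type} (P : B -> A -> Prop) (l : list B) :
  (forall b, In b l -> finite_set (P b)) ->
  finite_set (fun a => exists b, In b l /\ P b a).
Proof.
  induction l as [|b l IH]; intros Hl.
  - exists nil. intros a [c [[] _]].
  - destruct (Hl b (or_introl eq_refl)) as [lb Hlb].
    destruct IH as [lrest Hlrest]; [intros c Hc; apply Hl; right; exact Hc|].
    exists (lb ++ lrest). intros a [c [[<-|Hc] Hca]]; apply in_or_app.
    + left. apply Hlb, Hca.
    + right. apply Hlrest. eauto.
Qed.

Section PermutationGroups.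

Variable Omega : Type.

Definition stabilizer (G : (Omega -> Omega) -> Prop) (z : Omega)
  : (Omega -> Omega) -> Prop :=
  fun h => G h /\ h z = z.

Definition transporter (G : (Omega -> Omega) -> Prop) (z s : Omega)
  : (Omega -> Omega) -> Prop :=
  fun h => G h /\ h z = s.

Definition is_base (G : (Omega -> Omega) -> Prop) (F : list Omega) : Prop :=
  forall h, G h -> (forall x, In x F -> h x = x) -> h = (fun x => x).

Lemma stabilizer_subgroup (G : (Omega -> Omega) -> Prop) (z : Omega) :
  is_subgroup_Sym G -> is_subgroup_Sym (stabilizer G z).
Proof.
  intros [Hperm [Hid [Hcomp Hinv]]]. split; [|split; [|split]].
  - intros f [Gf _]. auto.
  - split; auto.
  - intros f g [Gf Hf] [Gg Hg]. split; [auto|]. rewrite Hg. exact Hf.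
  - intros f [Gf Hf]. destruct (Hinv f Gf) as [h [Gh [Hhf Hfh]]].
    exists h. repeat split; auto. rewrite <- Hf at 1. apply Hhf.
Qed.

Lemma is_base_stabilizer (G : (Omega -> Omega) -> Prop) (l1 l2 : list Omega)
    (z : Omega) :
  is_base G (l1 ++ z :: l2) -> is_base (stabilizer G z) (l1 ++ l2).
Proof.
  intros Hbase h [Gh Hhz] Hfix. apply Hbase; [exact Gh|].
  intros x Hx. apply in_app_or in Hx as [Hx|[<-|Hx]]; auto;
    apply Hfix, in_or_app; auto.
Qed.

Lemma transporter_finite (G : (Omega -> Omega) -> Prop) (z s : Omega) :
  is_subgroup_Sym G -> finite_set (stabilizer G z) ->
  finite_set (transporter G z s).
Proof.
  intros [_ [_ [Hcomp Hinv]]] [L HL].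
  destruct (classic (exists h0, transporter G z s h0)) as [[h0 [Gh0 Hh0]]|Hempty].
  2:{ exists nil. intros h Hh. apply Hempty. eauto. }
  destruct (Hinv h0 Gh0) as [h0' [Gh0' [Hh0'h0 Hh0h0']]].
  exists (map (fun k x => h0 (k x)) L). intros h [Gh Hh].
  replace h with (fun x => h0 (h0' (h x)))
    by (apply functional_extensionality; auto).
  apply (in_map (fun k x => h0 (k x))), HL. split.
  - apply Hcomp; assumption.
  - rewrite Hh, <- Hh0. apply Hh0'h0.
Qed.

Lemma base_image_meets_support (G : (Omega -> Omega) -> Prop) (F S : list Omega)
    (g h : Omega -> Omega) (x0 : Omega) :
  is_subgroup_Sym G -> is_base G F ->
  G g -> g x0 <> x0 -> (forall x, g x <> x -> In x S) ->
  G h -> exists z, In z F /\ In (h z) S.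
Proof.
  intros [_ [_ [Hcomp Hinv]]] Hbase Gg Hgx0 Hsupp Gh.
  apply NNPP. intros Hnone.
  destruct (Hinv h Gh) as [h' [Gh' [Hh'h Hhh']]].
  assert (Hconj : (fun x => h' (g (h x))) = (fun x => x)).
  { apply Hbase; [auto|]. intros z Hz.
    destruct (classic (g (h z) = h z)) as [->|Hmoved]; [apply Hh'h|].
    exfalso. eauto. }
  apply Hgx0.
  pose proof (f_equal (fun f => f (h' x0)) Hconj) as Hx0. simpl in Hx0.
  rewrite Hhh' in Hx0. rewrite <- (Hhh' (g x0)), Hx0, Hhh'. reflexivity.
Qed.

Lemma finite_of_base (n : nat) :
  forall (G : (Omega -> Omega) -> Prop) (F : list Omega),
  length F <= n -> is_subgroup_Sym G -> (forall g, G g -> finitary g) ->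
  is_base G F -> finite_set G.
Proof.
  induction n as [|n IH]; intros G F Hlen Hsub Hfin Hbase.
  - destruct F; [|simpl in Hlen; lia].
    exists ((fun x => x) :: nil). intros h Gh. left.
    symmetry. apply Hbase; [exact Gh|]. intros x [].
  - destruct (classic (exists g x0, G g /\ g x0 <> x0))
      as [[g [x0 [Gg Hgx0]]]|Htrivial].
    2:{ exists ((fun x => x) :: nil). intros h Gh. left.
        symmetry. apply functional_extensionality. intros x.
        apply NNPP. intros Hx. eauto. }
    destruct (Hfin g Gg) as [S Hsupp].
    destruct (finite_set_union (fun zs => transporter G (fst zs) (snd zs))
                (list_prod F S)) as [l Hl].
    + intros [z s] Hzs. apply in_prod_iff in Hzs as [Hz _].
      apply in_split in Hz as [l1 [l2 ->]].
      apply transporter_finite; [exact Hsub|].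
      apply (IH _ (l1 ++ l2)).
      * rewrite length_app in *. simpl in Hlen. lia.
      * apply stabilizer_subgroup, Hsub.
      * intros f [Gf _]. auto.
      * apply is_base_stabilizer, Hbase.
    + exists l. intros h Gh. apply Hl.
      destruct (base_image_meets_support G F S g h x0) as [z [Hz Hhz]]; auto.
      exists (z, h z). split; [apply in_prod; assumption|]. split; auto.
Qed.

End PermutationGroups.

Theorem lemma11p1 (Omega : Type) (G : (Omega -> Omega) -> Prop) :
  is_subgroup_Sym G ->
  discrete_pointwise G ->
  (forall g, G g -> finitary g) ->
  finite_set G.
Proof.
  intros Hsub Hdisc Hfin.
  destruct (Hdisc (fun x => x)) as [F HF]; [apply Hsub|].
  exact (finite_of_base Omega (length F) G F (le_n _) Hsub Hfin HF).
Qed.
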